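(* Let $\lambda>0$, let $G=(V,W)$ be a weighted graph with $N$ vertices, let $R\ge 1$, and let $C\subset\mathbb{M}_{N\times R}(\mathbb{R})$ be a nonempty closed convex set. Let $F^k=[f^k_1,\dots,f^k_R]\in C$, and assume $B^k_r:=B(f^k_r)\neq 0$ for all $r$. Set $E^k_r=T(f^k_r)/B^k_r$, let $\Delta^k>0$, and define $c^k_r=\Delta^k/B^k_r$, $d^k_r=\Delta^k E^k_r/B^k_r$, and the convex functions on $\mathbb{M}_{N\times R}(\mathbb{R})$ $$\mathcal{T}^k(F)=\sum_{r=1}^R c^k_r\,T(f_r),\qquad \mathcal{B}^k(F)=\sum_{r=1}^R d^k_r\,B(f_r),\qquad F=[f_1,\dots,f_R].$$ Let $V^k\in\partial\mathcal{B}^k(F^k)$ and define $$F^{k+1}=\operatorname*{argmin}_{F\in C}\ \mathcal{T}^k(F)+\tfrac12\|F-(F^k+V^k)\|_F^2 .$$ Then $F^{k+1}\in C$, and if moreover $B^{k+1}_r:=B(f^{k+1}_r)\neq0$ for all $r$ (so that $E^{k+1}_r:=T(f^{k+1}_r)/B^{k+1}_r$ is defined), then $$\sum_{r=1}^R\frac{B^{k+1}_r}{B^k_r}\bigl(E^k_r-E^{k+1}_r\bigr)\ \ge\ \frac{\|F^k-F^{k+1}\|_F^2}{\Delta^k}.$$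
   Context: The graph $G=(V,W)$ has vertex set $V=\{\mathbf{x}_1,\dots,\mathbf{x}_N\}$ and symmetric matrix $W=(w_{ij})$ with $w_{ij}\ge0$; functions on $V$ are identified with vectors in $\mathbb{R}^N$, $\mathbf{1}$ is the all-ones vector, and $\|\cdot\|_F$ is the Frobenius norm, with $\langle\cdot,\cdot\rangle$ the Frobenius inner product. - $T(f)=\|f\|_{TV}=\sum_{i=1}^N\sum_{j=1}^N w_{ij}|f(\mathbf{x}_i)-f(\mathbf{x}_j)|$. - $B(f)=\|f-\mathrm{med}_\lambda(f)\mathbf{1}\|_{1,\lambda}$, where $\|h\|_{1,\lambda}=\sum_i|h_i|_\lambda$ with $|t|_\lambda=\lambda t$ for $t\ge0$ and $|t|_\lambda=-t$ for $t<0$, and $\mathrm{med}_\lambda(f)$ is the $(k+1)$-st largest entry of $f$ counted with multiplicity, $k=\lfloor N/(\lambda+1)\rfloor$. - $T$ and $B$ are convex and nonnegative, so $c^k_r,d^k_r\ge0$ and $\mathcal{T}^k,\mathcal{B}^k$ are convex; $\partial$ denotes the convex subdifferential. The minimizer defining $F^{k+1}$ exists and is unique by strong convexity (it is the proximal operator of $\mathcal{T}^k+\delta_C$ applied to $F^k+V^k$, where $\delta_C$ is $0$ on $C$ and $+\infty$ off $C$). - In the paper, $C$ is either the simplex set $\Sigma=\{F\in\mathbb{M}_{N\times R}([0,1]): \sum_{r}f_r(\mathbf{x}_i)=1\ \forall i\}$ or its intersection with a label constraint set, but the result only uses that $C$ is nonempty, closed and convex. *)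

(* Scalars: an arbitrary Archimedean real field R
   (generalizes the real numbers; the floor is needed for med_lambda). *)
From HB Require Import structures.
From mathcomp Require Import all_boot all_order all_algebra.
Set Implicit Arguments. Unset Strict Implicit. Unset Printing Implicit Defensive.
Import Order.TTheory GRing.Theory Num.Theory.
Local Open Scope ring_scope.

Section Defs.
Variable R : archiRealFieldType.

Definition TV (N : nat) (W : 'M[R]_N) (f : 'cV[R]_N) : R :=
  \sum_(i < N) \sum_(j < N) W i j * `|f i 0 - f j 0|.

Definition abs_lam (lam t : R) : R := if 0 <= t then lam * t else - t.

Definition med_index (lam : R) (N : nat) : nat :=
  `|Num.floor (N%:R / (lam + 1))|%N.

(* med_lambda f = the (k+1)-st largest entry of f, counted with multiplicity *)
Definition med_lam (lam : R) (N : nat) (f : 'cV[R]_N) : R :=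
  nth 0 (sort (fun x y : R => y <= x) [seq f i 0 | i <- enum 'I_N])
      (med_index lam N).

Definition Bal (lam : R) (N : nat) (f : 'cV[R]_N) : R :=
  \sum_(i < N) abs_lam lam (f i 0 - med_lam lam f).

Definition frob_dot (m n : nat) (A B : 'M[R]_(m, n)) : R :=
  \sum_(i < m) \sum_(j < n) A i j * B i j.
Definition frob_norm2 (m n : nat) (A : 'M[R]_(m, n)) : R := frob_dot A A.

Definition convex_set (m n : nat) (C : 'M[R]_(m, n) -> Prop) : Prop :=
  forall A B, C A -> C B -> forall t : R, 0 <= t -> t <= 1 ->
    C (t *: A + (1 - t) *: B).

Definition subgrad (m n : nat) (phi : 'M[R]_(m, n) -> R) (X V : 'M[R]_(m, n))
  : Prop := forall Y, phi X + frob_dot V (Y - X) <= phi Y.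

Definition is_argmin (m n : nat) (C : 'M[R]_(m, n) -> Prop)
  (phi : 'M[R]_(m, n) -> R) (X : 'M[R]_(m, n)) : Prop :=
  C X /\ forall Y, C Y -> phi X <= phi Y.

End Defs.

From HB Require Import structures.
From mathcomp Require Import all_boot all_order all_algebra.
From mathcomp Require Import ring lra.
Import Order.TTheory GRing.Theory Num.Theory.
Local Open Scope ring_scope.
Set Implicit Arguments. Unset Strict Implicit. Unset Printing Implicit Defensive.

(* The argument is the classical one for proximal-gradient steps.
   1. The Frobenius product is a symmetric bilinear form, so the squared norm
      expands along a segment.
   2. Variational inequality: if X minimizes  phi + 1/2 ||. - Z||^2  over a
      convex set C, with phi convex, then for every Y in C
        phi Y - phi X + <X - Z, Y - X> >= 0
      (compare X with  t Y + (1-t) X, divide by t and let t -> 0).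
   3. Descent: with Z = Y + V and V a subgradient of a function B at Y, this
      gives  ||Y - X||^2 <= (T Y - B Y) + (B X - T X).
   4. For the theorem, T = calT^k is convex since TV is, and the weights c_r,
      d_r are chosen so that calT^k F^k = calB^k F^k, while the left-hand side
      of the claimed inequality is exactly (calB^k F^{k+1} - calT^k F^{k+1})
      divided by Delta^k. *)

Section FrobeniusProduct.
Variables (R : archiRealFieldType) (m n : nat).
Implicit Types (A B C : 'M[R]_(m, n)) (t : R).

Lemma frob_dotDl A B C : frob_dot (A + B) C = frob_dot A C + frob_dot B C.
Proof.
rewrite /frob_dot -big_split; apply: eq_bigr => i _.
by rewrite -big_split; apply: eq_bigr => j _; rewrite !mxE mulrDl.
Qed.

Lemma frob_dotZl t A C : frob_dot (t *: A) C = t * frob_dot A C.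
Proof.
rewrite /frob_dot mulr_sumr; apply: eq_bigr => i _.
by rewrite mulr_sumr; apply: eq_bigr => j _; rewrite !mxE mulrA.
Qed.

Lemma frob_dotNl A C : frob_dot (- A) C = - frob_dot A C.
Proof. by rewrite -scaleN1r frob_dotZl mulN1r. Qed.

Lemma frob_dotC A C : frob_dot A C = frob_dot C A.
Proof. by apply: eq_bigr => i _; apply: eq_bigr => j _; rewrite mulrC. Qed.

Lemma frob_dotDr A B C : frob_dot C (A + B) = frob_dot C A + frob_dot C B.
Proof. by rewrite frob_dotC frob_dotDl !(frob_dotC C). Qed.

Lemma frob_dotZr t A C : frob_dot C (t *: A) = t * frob_dot C A.
Proof. by rewrite frob_dotC frob_dotZl frob_dotC. Qed.

Lemma frob_norm2_line A B t :
  frob_norm2 (A + t *: B) =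
  frob_norm2 A + 2 * t * frob_dot A B + t ^+ 2 * frob_norm2 B.
Proof.
rewrite /frob_norm2 frob_dotDl !frob_dotDr !frob_dotZl !frob_dotZr.
by rewrite (frob_dotC B A); ring.
Qed.

End FrobeniusProduct.

Lemma ge0_from_right (R : realFieldType) (a b : R) :
  (forall t, 0 < t -> t <= 1 -> 0 <= a + t * b) -> 0 <= a.
Proof.
move=> H; case: (lerP 0 a) => // a_lt0.
have := H 1 ltr01 (lexx _); rewrite mul1r => h1.
set t := - a / (2 * b).
have b_gt0 : 0 < b by lra.
have t_gt0 : 0 < t by apply: divr_gt0; lra.
have tb : t * b = - a / 2 by rewrite /t; field; lra.
case: (lerP t 1) => t_le1; first by have := H t t_gt0 t_le1; lra.
have : 2 * b < t * (2 * b) by rewrite -[X in X < _]mul1r ltr_pM2r //; lra.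
lra.
Qed.

Section Proximal.
Variables (R : archiRealFieldType) (m n : nat).
Implicit Types (phi psi : 'M[R]_(m, n) -> R) (C : 'M[R]_(m, n) -> Prop).

Definition convex_fun phi : Prop :=
  forall A B t, 0 <= t -> t <= 1 ->
    phi (t *: A + (1 - t) *: B) <= t * phi A + (1 - t) * phi B.

Lemma prox_variational {C phi Z X} :
  convex_set C -> convex_fun phi ->
  is_argmin C (fun F => phi F + 2^-1 * frob_norm2 (F - Z)) X ->
  forall Y, C Y -> 0 <= phi Y - phi X + frob_dot (X - Z) (Y - X).
Proof.
move=> convC convphi [CX Xmin] Y CY.
apply: (@ge0_from_right _ _ (frob_norm2 (Y - X) / 2)) => t t_gt0 t_le1.
have t_ge0 := ltW t_gt0.
have segment : t *: Y + (1 - t) *: X - Z = (X - Z) + t *: (Y - X).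
  by apply/matrixP => i j; rewrite !mxE; ring.
have opt := Xmin _ (convC _ _ CY CX t t_ge0 t_le1).
rewrite segment frob_norm2_line in opt.
have phi_seg := convphi Y X t t_ge0 t_le1.
have : 0 <= t * (phi Y - phi X + frob_dot (X - Z) (Y - X)
                   + t * (frob_norm2 (Y - X) / 2)) by nra.
by rewrite pmulr_rge0.
Qed.

Lemma prox_subgrad_descent {C phi psi Y V X} :
  convex_set C -> convex_fun phi -> C Y ->
  subgrad psi Y V ->
  is_argmin C (fun F => phi F + 2^-1 * frob_norm2 (F - (Y + V))) X ->
  frob_norm2 (Y - X) <= (phi Y - psi Y) + (psi X - phi X).
Proof.
move=> convC convphi CY Vsub Xmin.
have := prox_variational convC convphi Xmin CY.
have -> : X - (Y + V) = - (Y - X) - V by rewrite opprD addrA opprB addrC addrA.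
rewrite frob_dotDl !frob_dotNl -/(frob_norm2 _).
have := Vsub X; rewrite -[X - Y]opprB -scaleN1r frob_dotZr; lra.
Qed.

End Proximal.

Section GraphFunctionals.
Variables (R : archiRealFieldType) (N : nat).

Lemma TV_convex {W : 'M[R]_N} :
  (forall i j, 0 <= W i j) -> convex_fun (TV W).
Proof.
move=> W_ge0 A B t t_ge0 t_le1.
rewrite /TV !mulr_sumr -big_split /=; apply: ler_sum => i _.
rewrite !mulr_sumr -big_split /=; apply: ler_sum => j _; rewrite !mxE.
have -> : t * A i 0 + (1 - t) * B i 0 - (t * A j 0 + (1 - t) * B j 0)
   = t * (A i 0 - A j 0) + (1 - t) * (B i 0 - B j 0) by ring.
rewrite mulrCA [_ * (W i j * _)]mulrCA -mulrDr.
apply: ler_wpM2l => //; apply: le_trans (ler_normD _ _) _.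
have omt_ge0 : 0 <= 1 - t by lra.
by rewrite !normrM (ger0_norm t_ge0) (ger0_norm omt_ge0).
Qed.

Lemma Bal_ge0 {lam : R} (f : 'cV[R]_N) : 0 < lam -> 0 <= Bal lam f.
Proof.
move=> lam_gt0; apply: sumr_ge0 => i _; rewrite /abs_lam.
case: ifPn => [x_ge0 | ]; first by apply: mulr_ge0; lra.
by rewrite -ltNge => x_lt0; lra.
Qed.

End GraphFunctionals.

Lemma col_sum_convex (R : archiRealFieldType) (m n : nat)
    {g : 'cV[R]_m -> R} {w : 'I_n -> R} :
  convex_fun g -> (forall r, 0 <= w r) ->
  convex_fun (fun F : 'M[R]_(m, n) => \sum_(r < n) w r * g (col r F)).
Proof.
move=> convg w_ge0 A B t t_ge0 t_le1.
rewrite !mulr_sumr -big_split /=; apply: ler_sum => r _.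
have -> : col r (t *: A + (1 - t) *: B) = t *: col r A + (1 - t) *: col r B.
  by apply/matrixP => i j; rewrite !mxE.
rewrite mulrCA [(1 - t) * _]mulrCA -mulrDr.
by apply: ler_wpM2l; [exact: w_ge0 | exact: convg].
Qed.

Theorem theorem3 (R : archiRealFieldType) (lam : R) (N Rr : nat)
  (W : 'M[R]_N) (C : 'M[R]_(N, Rr) -> Prop) (Fk Vk Fk1 : 'M[R]_(N, Rr))
  (Delta : R) :
  0 < lam ->
  W^T = W -> (forall i j, 0 <= W i j) ->
  (0 < Rr)%N ->
  convex_set C ->
  C Fk ->
  (forall r, Bal lam (col r Fk) != 0) ->
  0 < Delta ->
  let Bk r := Bal lam (col r Fk) in
  let Ek r := TV W (col r Fk) / Bk r in
  let c r := Delta / Bk r in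
  let d r := Delta * Ek r / Bk r in
  let calT F := \sum_(r < Rr) c r * TV W (col r F) in
  let calB F := \sum_(r < Rr) d r * Bal lam (col r F) in
  subgrad calB Fk Vk ->
  is_argmin C (fun F => calT F + 2^-1 * frob_norm2 (F - (Fk + Vk))) Fk1 ->
  C Fk1 /\
  ((forall r, Bal lam (col r Fk1) != 0) ->
   let Bk1 r := Bal lam (col r Fk1) in
   let Ek1 r := TV W (col r Fk1) / Bk1 r in
   \sum_(r < Rr) Bk1 r / Bk r * (Ek r - Ek1 r) >= frob_norm2 (Fk - Fk1) / Delta).
Proof.
move=> lam_gt0 _ W_ge0 _ convC CFk Bk_neq0 Delta_gt0 Bk Ek c d calT calB
  Vsub Fk1_min.
split; first by case: Fk1_min.
move=> Bk1_neq0 /=.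
have c_ge0 r : 0 <= c r by apply: divr_ge0 (ltW _) (Bal_ge0 _ lam_gt0).
have convT : convex_fun calT by apply: col_sum_convex (TV_convex W_ge0) c_ge0.
have descent := prox_subgrad_descent convC convT CFk Vsub Fk1_min.
have TB_Fk : calT Fk = calB Fk.
  by apply: eq_bigr => r _; rewrite /d /c /Ek -/(Bk r); field; exact: Bk_neq0.
have gap_Fk1 : (\sum_(r < Rr) Bal lam (col r Fk1) / Bk r *
                  (Ek r - TV W (col r Fk1) / Bal lam (col r Fk1))) * Delta
               = calB Fk1 - calT Fk1.
  rewrite -sumrB mulr_suml; apply: eq_bigr => r _.
  by rewrite /d /c /Ek; field; rewrite Bk_neq0 Bk1_neq0.
by rewrite ler_pdivrMr // gap_Fk1; lra.
Qed.
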